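(* Let $n\ge 2$, let $A=(a_{ij})$ be an $n\times n$ nonnegative irreducible matrix, and let $c=(c_1,\dots,c_n)^T$ be any vector with all components positive. For $1\le i\le n$ put \[M_i=\frac{1}{c_i}\sum_{j=1}^n a_{ij}c_j,\qquad M=\max_{1\le i\le n} a_{ii},\qquad N=\max_{i\ne j}\frac{a_{ij}c_j}{c_i}.\] Assume (after relabeling indices) that $M_1\ge M_2\ge\cdots\ge M_n$, and that $N>0$. Then for every $1\le i\le n$, \[\rho(A)\le \frac{M_i+M-N+\sqrt{(M_i-M+N)^2+4N\sum_{k=1}^{i-1}(M_k-M_i)}}{2}.\] Moreover, equality holds if and only if either $M_1=M_2=\cdots=M_n$, or there is some $t$ with $2\le t\le i$ such that: (i) $a_{kk}=M$ for $1\le k\le t-1$; (ii) $\frac{a_{kl}c_l}{c_k}=N$ for all $1\le k\le n$, $1\le l\le t-1$ with $k\ne l$; (iii) $M_t=M_{t+1}=\cdots=M_n$.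
   Context: $\rho(A)$ denotes the spectral radius of $A$ (largest modulus of an eigenvalue). An empty sum equals $0$. *)

(* Scalars live in an arbitrary numeric algebraically closed
   field C (e.g. the complex numbers); the matrix entries are required to be
   nonnegative, hence real. *)
From HB Require Import structures.
From mathcomp Require Import all_boot all_order all_algebra.
Set Implicit Arguments. Unset Strict Implicit. Unset Printing Implicit Defensive.
Import Order.TTheory GRing.Theory Num.Theory.
Local Open Scope ring_scope.

(* binary maximum on C (used only on real, comparable values) *)
Definition maxr (C : numClosedFieldType) (x y : C) : C := if x <= y then y else x.

(* the eigenvalues of A, listed with algebraic multiplicity: the roots of its
   characteristic polynomial, which splits over the closed field C *)
Definition eigenvalues (C : numClosedFieldType) (n : nat) (A : 'M[C]_n) : seq C :=
  sval (closed_field_poly_normal (char_poly A)).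

Definition spectral_radius (C : numClosedFieldType) (n : nat) (A : 'M[C]_n) : C :=
  \big[@maxr C/0]_(l <- eigenvalues A) `|l|.

Definition nonneg_mx (C : numClosedFieldType) (n : nat) (A : 'M[C]_n) : Prop :=
  forall i j, 0 <= A i j.

(* A is reducible iff there is a nonempty proper subset S of indices with
   a_ij = 0 for i in S, j not in S (i.e. A is permutation-similar to a block
   triangular matrix with nontrivial square diagonal blocks). *)
Definition irreducible_mx (C : numClosedFieldType) (n : nat) (A : 'M[C]_n) : Prop :=
  ~ (exists S : {set 'I_n}, [/\ S != set0, S != setT &
        forall i j, i \in S -> j \notin S -> A i j = 0]).

Definition Mrow (C : numClosedFieldType) (n : nat) (A : 'M[C]_n) (c : 'I_n -> C)
  (i : 'I_n) : C := (c i)^-1 * \sum_(j < n) A i j * c j.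

Definition Mdiag (C : numClosedFieldType) (n : nat) (A : 'M[C]_n) : C :=
  \big[@maxr C/0]_(i < n) A i i.

Definition Noff (C : numClosedFieldType) (n : nat) (A : 'M[C]_n) (c : 'I_n -> C) : C :=
  \big[@maxr C/0]_(ij : 'I_n * 'I_n | ij.1 != ij.2) (A ij.1 ij.2 * c ij.2 / c ij.1).

(* the bound, for (0-indexed) i *)
Definition bound (C : numClosedFieldType) (n : nat) (A : 'M[C]_n) (c : 'I_n -> C)
  (i : 'I_n) : C :=
  let Mi := Mrow A c i in let M := Mdiag A in let N := Noff A c in
  (Mi + M - N + sqrtC ((Mi - M + N) ^+ 2
      + 4%:R * N * \sum_(k < n | (k < i)%N) (Mrow A c k - Mi))) / 2%:R.

From HB Require Import structures.
From mathcomp Require Import all_boot all_order all_algebra.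
From mathcomp Require Import ring.
Import Order.TTheory GRing.Theory Num.Theory.
Set Implicit Arguments.
Unset Strict Implicit.
Unset Printing Implicit Defensive.
Local Open Scope ring_scope.

(* The argument is the Collatz-Wielandt principle: if y > 0 and A y <= lam y
   componentwise, then rho(A) <= lam, and for irreducible A equality holds iff
   A y = lam y.  We prove this first for an arbitrary nonnegative matrix by
   comparing an eigenvector w with y through the ratios |w_k| / y_k.

   For the theorem, lam is the bound itself; it is the largest root of
   (x - M_i)(x - M + N) = N * sum_(k<i) (M_k - M_i).  The test vector is
   y_k = c_k (1 + e_k) with e_k = (M_k - M_i) / (lam - M + N) for k < i and
   e_k = 0 otherwise.  Bounding a_kk c_k / c_k by M and the off-diagonal
   a_kl c_l / c_k by N shows lam y_k - (A y)_k = c_k * s_k for an explicit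
   nonnegative slack s_k, a sum of nonnegative terms; rho(A) = lam iff all
   slacks vanish, which is then shown to be equivalent to the stated equality
   conditions (with t the first index where M_t = M_i). *)

Section BigMax.
Variable C : numClosedFieldType.

Lemma maxr_cases (x y : C) : maxr x y = x \/ maxr x y = y.
Proof. by rewrite /maxr; case: ifP; [right|left]. Qed.

Lemma maxr_ge {x y : C} :
  x \is Num.real -> y \is Num.real -> x <= maxr x y /\ y <= maxr x y.
Proof.
move=> xr yr; rewrite /maxr; case: ifP => [-> //|yx]; split=> //.
by rewrite ltW // real_ltNge // yx.
Qed.

Lemma maxr_big_le (I : eqType) (s : seq I) (P : pred I) (F : I -> C) b :
  0 <= b -> (forall x, x \in s -> P x -> F x <= b) ->
  \big[@maxr C/0]_(x <- s | P x) F x <= b.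
Proof.
move=> b_ge0 Fb; rewrite big_seq_cond; apply: (big_ind (fun x => x <= b)) => //.
  by move=> x y xb yb; case: (maxr_cases x y) => ->.
by move=> x /andP[]; apply: Fb.
Qed.

Lemma maxr_big_ge0 (I : Type) (s : seq I) (P : pred I) (F : I -> C) :
  (forall x, P x -> 0 <= F x) -> 0 <= \big[@maxr C/0]_(x <- s | P x) F x.
Proof.
move=> F_ge0; apply: (big_ind (fun x => 0 <= x)) => // x y x0 y0.
by case: (maxr_cases x y) => ->.
Qed.

Lemma le_maxr_big (I : eqType) (s : seq I) (P : pred I) (F : I -> C) :
  (forall x, P x -> F x \is Num.real) ->
  forall x, x \in s -> P x -> F x <= \big[@maxr C/0]_(y <- s | P y) F y.
Proof.
move=> Freal x; elim: s => [//|a s IHs].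
have max_real : \big[@maxr C/0]_(y <- s | P y) F y \is Num.real.
  apply: (big_ind (fun x => x \is Num.real)) => // u v ur vr.
  by case: (maxr_cases u v) => ->.
rewrite inE big_cons => /orP[/eqP-> | xs] Px.
  by rewrite Px; case: (maxr_ge (Freal _ Px) max_real).
case: ifP => Pa; last exact: IHs.
by case: (maxr_ge (Freal _ Pa) max_real) => _; apply: le_trans (IHs xs Px).
Qed.

Lemma maxr_big_attained (I : eqType) (s : seq I) (F : I -> C) :
  \big[@maxr C/0]_(x <- s) F x = 0 \/
  exists2 x, x \in s & \big[@maxr C/0]_(x <- s) F x = F x.
Proof.
rewrite big_seq.
apply: (big_ind (fun v => v = 0 \/ exists2 x, x \in s & v = F x)); first by left.
  by move=> u v Hu Hv; case: (maxr_cases u v) => ->.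
by move=> x xs; right; exists x.
Qed.

End BigMax.

Section Spectrum.
Variables (C : numClosedFieldType) (n : nat).
Implicit Types (A : 'M[C]_n) (l lam : C).

(* Transposition does not change the characteristic polynomial; it lets us
   pass from the row eigenvectors of the library to column eigenvectors. *)
Lemma char_poly_tr (F : fieldType) (B : 'M[F]_n) : char_poly B^T = char_poly B.
Proof.
rewrite /char_poly -det_tr; congr (\det _).
by apply/matrixP => i j; rewrite !mxE eq_sym.
Qed.

Lemma eigenvaluesP A l :
  l \in eigenvalues A <-> exists2 w : 'I_n -> C,
    (exists k, w k != 0) & forall k, \sum_j A k j * w j = l * w k.
Proof.
have -> : (l \in eigenvalues A) = root (char_poly A) l.
  rewrite /eigenvalues; case: closed_field_poly_normal => r /= ->.
  by rewrite (monicP (char_poly_monic A)) scale1r root_prod_XsubC.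
rewrite -char_poly_tr -eigenvalue_root_char; split.
  move=> /eigenvalueP[v vA v_neq0]; exists (fun j => v 0 j).
    case: (pickP (fun k => v 0 k != 0)) => [k vk|v0]; first by exists k.
    case/negP: v_neq0; apply/eqP/matrixP => i j; rewrite (ord1 i) !mxE.
    by move: (v0 j) => /negbFE/eqP.
  move=> k; move/matrixP: vA => /(_ 0 k); rewrite !mxE => <-.
  by apply: eq_bigr => j _; rewrite mxE mulrC.
move=> [w [k wk] Aw]; apply/eigenvalueP; exists (\row_j w j).
  apply/matrixP => i j; rewrite (ord1 i) !mxE -Aw.
  by apply: eq_bigr => m _; rewrite !mxE mulrC.
by apply/negP => /eqP/matrixP/(_ 0 k); rewrite !mxE; apply/eqP.
Qed.

Lemma spectral_radius_le A lam :
  0 <= lam -> (forall l, l \in eigenvalues A -> `|l| <= lam) ->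
  spectral_radius A <= lam.
Proof.
by move=> lam_ge0 eig_le; rewrite /spectral_radius maxr_big_le // => l /eig_le.
Qed.

Lemma le_spectral_radius A l :
  l \in eigenvalues A -> `|l| <= spectral_radius A.
Proof.
by move=> eig_l; apply: le_maxr_big => // x _; apply: normr_real.
Qed.

Lemma spectral_radius_attained A :
  0 < spectral_radius A ->
  exists2 l, l \in eigenvalues A & `|l| = spectral_radius A.
Proof.
rewrite /spectral_radius.
case: (maxr_big_attained (eigenvalues A) (fun x => `|x|)) => [-> | [l eig_l ->]].
  by rewrite ltxx.
by exists l.
Qed.

End Spectrum.

Lemma irreducible_closed_set (C : numClosedFieldType) n (K : 'M[C]_n)
    (S : {set 'I_n}) :
  irreducible_mx K -> S != set0 ->
  (forall k l, k \in S -> K k l != 0 -> l \in S) -> S = setT.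
Proof.
move=> irr S_neq0 S_closed; apply/eqP; apply/negPn/negP => S_neqT.
apply: irr; exists S; split=> // k l kS lS; apply/eqP/negPn/negP.
by move=> /(S_closed k l kS); rewrite (negbTE lS).
Qed.

(* The ratios r_k = |w_k| / y_k, with maximum m > 0, satisfy
   |mu| y_k r_k <= sum_l K_kl y_l r_l <= m (K y)_k <= m lam y_k. *)
Section Subinvariant.
Variables (C : numClosedFieldType) (n : nat) (K : 'M[C]_n).
Variables (y w : 'I_n -> C) (lam mu : C).
Hypotheses (K_ge0 : forall k l, 0 <= K k l) (y_gt0 : forall k, 0 < y k).
Hypothesis Ky_le : forall k, \sum_l K k l * y l <= lam * y k.
Hypothesis w_neq0 : exists k, w k != 0.
Hypothesis Kw : forall k, \sum_l K k l * w l = mu * w k.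

Let r k := `|w k| / y k.
Let m := \big[@maxr C/0]_k r k.

Let r_ge0 k : 0 <= r k.
Proof. by rewrite divr_ge0 // ltW. Qed.

Let norm_w k : `|w k| = y k * r k.
Proof. by rewrite mulrC divfK // gt_eqF. Qed.

Let r_le_m k : r k <= m.
Proof.
by apply: le_maxr_big => [x _| |]; rewrite ?ger0_real ?mem_index_enum.
Qed.

Let m_gt0 : 0 < m.
Proof.
have [k wk] := w_neq0.
by apply: lt_le_trans (r_le_m k); rewrite divr_gt0 ?normr_gt0.
Qed.

Let m_attained : exists k, r k = m.
Proof.
case: (maxr_big_attained (index_enum 'I_n) r) => [m0 | [k' _ mk']].
  by move: m_gt0; rewrite /m m0 ltxx.
by exists k'.
Qed.

Let row_chain k :
  `|mu| * (y k * r k) <= \sum_l K k l * y l * r l /\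
  \sum_l K k l * y l * r l <= m * \sum_l K k l * y l.
Proof.
split.
  rewrite -norm_w -normrM -Kw; apply: le_trans (ler_norm_sum _ _ _) _.
  by apply: ler_sum => l _; rewrite normrM ger0_norm // norm_w mulrA.
rewrite mulr_sumr; apply: ler_sum => l _; rewrite mulrC ler_wpM2r //.
by rewrite mulr_ge0 // ltW.
Qed.

(* Evaluating the chain at a row where r is maximal gives |mu| <= lam. *)
Lemma subinvariant_eig_le : `|mu| <= lam.
Proof.
have [k rk] := m_attained; have [chain1 chain2] := row_chain k.
have := le_trans chain1 (le_trans chain2 (ler_wpM2l (ltW m_gt0) (Ky_le k))).
by rewrite rk [m * _]mulrC -mulrA ler_pM2r ?mulr_gt0.
Qed.

(* In a row where r attains its maximum, |mu| = lam forces equality throughout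
   the chain: the row of K y is tight, and every successor of k is maximal. *)
Let maximal_row k : `|mu| = lam -> r k = m ->
  \sum_l K k l * y l = lam * y k /\ forall l, K k l != 0 -> r l = m.
Proof.
move=> mu_lam rk; have [chain1 chain2] := row_chain k.
have chain3 := ler_wpM2l (ltW m_gt0) (Ky_le k).
have top : m * (lam * y k) = `|mu| * (y k * r k) by rewrite mu_lam rk; ring.
have eq3 : m * \sum_l K k l * y l = m * (lam * y k).
  by apply: le_anti; rewrite chain3 top (le_trans chain1 chain2).
have eq2 : \sum_l K k l * y l * r l = m * \sum_l K k l * y l.
  by apply: le_anti; rewrite chain2 eq3 top chain1.
split; first by apply: (mulfI (lt0r_neq0 m_gt0)); exact: eq3.
have gaps_ge0 l : true -> 0 <= K k l * y l * (m - r l).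
  by rewrite !mulr_ge0 ?subr_ge0 // ltW.
have gaps_eq0 : \sum_l K k l * y l * (m - r l) = 0.
  under eq_bigr do rewrite mulrBr.
  by rewrite sumrB -mulr_suml eq2 mulrC subrr.
move=> l Kkl; move: (psumr_eq0P gaps_ge0 gaps_eq0 (i := l) isT) => /eqP.
by rewrite !mulf_eq0 (negbTE Kkl) gt_eqF //= subr_eq0 => /eqP.
Qed.

(* When |mu| = lam, the maximal rows form a closed set, hence every row by
   irreducibility, and all of them are tight. *)
Lemma subinvariant_eig_eq : `|mu| = lam -> irreducible_mx K ->
  forall k, \sum_l K k l * y l = lam * y k.
Proof.
move=> mu_lam irr k; have [k0 rk0] := m_attained.
have top_all : [set k | r k == m] = setT.
  apply: irreducible_closed_set irr _ _.
    by apply/set0Pn; exists k0; rewrite inE rk0.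
  move=> k1 l; rewrite !inE => /eqP rk1 Kk1l.
  by rewrite ((maximal_row mu_lam rk1).2 l Kk1l).
have : k \in [set k | r k == m] by rewrite top_all inE.
by rewrite inE => /eqP /(maximal_row mu_lam) [].
Qed.

End Subinvariant.

Theorem subinvariant_spectral_radius (C : numClosedFieldType) n (K : 'M[C]_n)
    (y : 'I_n -> C) (lam : C) :
  (0 < n)%N -> (forall k l, 0 <= K k l) -> irreducible_mx K ->
  (forall k, 0 < y k) -> (forall k, \sum_l K k l * y l <= lam * y k) -> 0 < lam ->
  spectral_radius K <= lam /\
  (spectral_radius K = lam <-> forall k, \sum_l K k l * y l = lam * y k).
Proof.
move=> n_gt0 K_ge0 irr y_gt0 Ky_le lam_gt0.
have rho_le : spectral_radius K <= lam.
  apply: spectral_radius_le (ltW lam_gt0) _ => mu /eigenvaluesP[w w_neq0 Kw].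
  exact: subinvariant_eig_le K_ge0 y_gt0 Ky_le w_neq0 Kw.
split=> //; split=> [rho_lam | Ky_eq].
  have [|mu /eigenvaluesP[w w_neq0 Kw] mu_rho] := @spectral_radius_attained _ _ K.
    by rewrite rho_lam.
  by apply: subinvariant_eig_eq K_ge0 y_gt0 Ky_le w_neq0 Kw _ irr; rewrite mu_rho.
apply: le_anti; rewrite rho_le -{1}(gtr0_norm lam_gt0) le_spectral_radius //.
by apply/eigenvaluesP; exists y => //; exists (Ordinal n_gt0); rewrite gt_eqF.
Qed.

(* When S = 0 this
   root is m, whence the side condition M, N <= m in that case. *)
Lemma quadratic_bound (C : numClosedFieldType) (m M N S : C) :
  0 <= m -> 0 <= M -> 0 < N -> 0 <= S -> (S = 0 -> M <= m /\ N <= m) ->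
  let lam := (m + M - N + sqrtC ((m - M + N) ^+ 2 + 4%:R * N * S)) / 2%:R in
  [/\ 0 < lam, 0 < lam - M + N & (lam - m) * (lam - M + N) = N * S].
Proof.
move=> m_ge0 M_ge0 N_gt0 S_ge0 S_eq0 lam.
pose q := m - M + N; pose s := sqrtC (q ^+ 2 + 4%:R * N * S).
have lamE : lam = (m + M - N + s) / 2%:R by [].
have q_real : q \is Num.real by rewrite rpredD ?rpredB ?ger0_real // ltW.
have s_sq : s ^+ 2 = q ^+ 2 + 4%:R * N * S by rewrite sqrtCK.
have lam_m : lam - m = (s - q) / 2%:R by rewrite lamE /q; field.
have gapE : lam - M + N = (s + q) / 2%:R by rewrite lamE /q; field.
have prod : (lam - m) * (lam - M + N) = N * S.
  rewrite lam_m gapE; transitivity ((s ^+ 2 - q ^+ 2) / 4%:R); first by field.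
  by rewrite s_sq; field.
have q2_ge0 : 0 <= q ^+ 2 by rewrite -real_normK // exprn_ge0.
have s_ge0 : 0 <= s by rewrite sqrtC_ge0 addr_ge0 // !mulr_ge0 // ltW.
case: (eqVneq S 0) => [S_0 | S_neq0].
  have [Mm Nm] := S_eq0 S_0.
  have q_gt0 : 0 < q by apply: lt_le_trans N_gt0 _; rewrite lerDr subr_ge0.
  have gap_gt0 : 0 < lam - M + N.
    rewrite gapE; apply: divr_gt0; last by rewrite ltr0n.
    by apply: lt_le_trans q_gt0 _; rewrite lerDr.
  have lam_eq : lam = m.
    move: prod; rewrite S_0 mulr0 => /eqP.
    by rewrite mulf_eq0 (gt_eqF gap_gt0) orbF subr_eq0 => /eqP.
  by split=> //; rewrite lam_eq (lt_le_trans N_gt0).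
have NS_gt0 : 0 < 4%:R * N * S by rewrite !mulr_gt0 ?ltr0n // lt_def S_neq0.
have q_lt_s : `|q| < s.
  by rewrite -(@ltr_pXn2r _ 2) ?nnegrE ?normr_ge0 // real_normK // s_sq ltrDl.
have gap_gt0 : 0 < lam - M + N.
  rewrite gapE; apply: divr_gt0; rewrite ?ltr0n // -[q]opprK subr_gt0.
  by rewrite (le_lt_trans _ q_lt_s) // -normrN real_ler_norm ?rpredN.
have lam_gt_m : 0 < lam - m.
  by rewrite -(pmulr_lgt0 _ gap_gt0) prod mulr_gt0 // lt_def S_neq0.
by split=> //; apply: lt_le_trans lam_gt_m _; rewrite gerBl.
Qed.

Section TestVector.
Variables (C : numClosedFieldType) (n : nat) (A : 'M[C]_n) (c : 'I_n -> C).
Variable i : 'I_n.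
Hypotheses (A_ge0 : nonneg_mx A) (c_gt0 : forall k, 0 < c k).
Hypothesis Mrow_sorted : forall j k : 'I_n, (j <= k)%N -> Mrow A c k <= Mrow A c j.
Hypothesis N_gt0 : 0 < Noff A c.

Implicit Types k l : 'I_n.

Local Notation M := (Mdiag A).
Local Notation N := (Noff A c).
Local Notation Mr := (Mrow A c).
Local Notation lam := (bound A c i).

Let c_neq0 k : c k != 0. Proof. exact: lt0r_neq0. Qed.

(* The entries of the similar matrix D^-1 A D, with D = diag c. *)
Definition scaled (k l : 'I_n) : C := A k l * c l / c k.

Definition cap (k l : 'I_n) : C := if l == k then M else N.

Lemma scaled_ge0 k l : 0 <= scaled k l.
Proof. by rewrite /scaled !mulr_ge0 ?invr_ge0 ?A_ge0 // ltW. Qed.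

Lemma scaled_diag k : scaled k k = A k k.
Proof. by rewrite /scaled mulfK. Qed.

Lemma Mrow_scaled k : Mr k = \sum_l scaled k l.
Proof. by rewrite /Mrow mulr_sumr; apply: eq_bigr => l _; rewrite /scaled mulrC. Qed.

Lemma scaled_le_Mrow k l : scaled k l <= Mr k.
Proof.
by rewrite Mrow_scaled (bigD1 l) //= lerDl sumr_ge0 // => j _; apply: scaled_ge0.
Qed.

Lemma Mrow_ge0 k : 0 <= Mr k.
Proof. exact: le_trans (scaled_ge0 k k) (scaled_le_Mrow k k). Qed.

Lemma Mdiag_ge0 : 0 <= M.
Proof. by apply: maxr_big_ge0 => k _; apply: A_ge0. Qed.

Lemma scaled_le_cap k l : scaled k l <= cap k l.
Proof.
rewrite /cap; case: eqP => [-> | /eqP lk].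
  rewrite scaled_diag /Mdiag.
  exact: (@le_maxr_big _ _ _ _ (fun j => A j j) (fun j _ => ger0_real (A_ge0 j j))
           k (mem_index_enum _) isT).
have real_scaled (ij : 'I_n * 'I_n) : scaled ij.1 ij.2 \is Num.real.
  exact/ger0_real/scaled_ge0.
have k_ne_l : (k, l).1 != (k, l).2 by rewrite /= eq_sym.
exact: (@le_maxr_big _ _ _ _ (fun ij => scaled ij.1 ij.2) (fun ij _ => real_scaled ij)
         (k, l) (mem_index_enum _) k_ne_l).
Qed.

Definition excess : C := \sum_(k < n | (k < i)%N) (Mr k - Mr i).

Lemma excess_ge0 : 0 <= excess.
Proof. by apply: sumr_ge0 => k ki; rewrite subr_ge0 Mrow_sorted // ltnW. Qed.

(* A zero excess makes M_i the largest row sum, which dominates every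
   entry; this is the side condition of quadratic_bound. *)
Lemma excess_eq0 : excess = 0 -> M <= Mr i /\ N <= Mr i.
Proof.
move=> excess0.
have Mr_le (k : 'I_n) : Mr k <= Mr i.
  case: (leqP i k) => [ik | ki]; first exact: Mrow_sorted.
  have terms_ge0 (j : 'I_n) : (j < i)%N -> 0 <= Mr j - Mr i.
    by move=> ji; rewrite subr_ge0 Mrow_sorted // ltnW.
  move/eqP: (psumr_eq0P terms_ge0 excess0 (i := k) ki).
  by rewrite subr_eq0 => /eqP ->.
split; apply: maxr_big_le (Mrow_ge0 i) _.
  by move=> k _ _; rewrite -scaled_diag (le_trans (scaled_le_Mrow k k)).
by move=> [k l] _ _; apply: le_trans (scaled_le_Mrow k l) (Mr_le k).
Qed.

Definition gap : C := lam - M + N.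

Lemma bound_facts : [/\ 0 < lam, 0 < gap & (lam - Mr i) * gap = N * excess].
Proof.
exact: quadratic_bound (Mrow_ge0 i) Mdiag_ge0 N_gt0 excess_ge0 excess_eq0.
Qed.

Let gap_gt0 : 0 < gap. Proof. by case: bound_facts. Qed.

Definition weight (k : 'I_n) : C := if (k < i)%N then (Mr k - Mr i) / gap else 0.

Lemma weight_ge0 k : 0 <= weight k.
Proof.
rewrite /weight; case: ifP => // ki.
by apply: divr_ge0; [rewrite subr_ge0 Mrow_sorted // ltnW | exact: ltW].
Qed.

Lemma N_weight_sum : N * \sum_l weight l = lam - Mr i.
Proof.
have [_ _ gap_excess] := bound_facts.
have -> : \sum_l weight l = excess / gap.
  rewrite /excess mulr_suml [RHS]big_mkcond; apply: eq_bigr => k _ /=.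
  by rewrite /weight; case: ifP; rewrite ?mul0r.
by rewrite mulrA -gap_excess mulfK // gt_eqF.
Qed.

Lemma weight_tail k : (i <= k)%N -> weight k = 0.
Proof. by rewrite /weight ltnNge => ->. Qed.

Lemma weight_eq0 k : Mr k = Mr i -> weight k = 0.
Proof. by rewrite /weight => ->; rewrite subrr mul0r; case: ifP. Qed.

Lemma weight_neq0 k : (k < i)%N -> Mr k != Mr i -> weight k != 0.
Proof.
by move=> ki Mk; rewrite /weight ki mulf_neq0 ?subr_eq0 // invr_neq0 // gt_eqF.
Qed.

(* The weights are designed so that gap * e_k = M_k - M_i before i; after i
   the inequality follows from the ordering of the row sums. *)
Lemma gap_weight_lt k : (k < i)%N -> Mr k - Mr i = gap * weight k.
Proof. by move=> ki; rewrite /weight ki mulrC divfK // gt_eqF. Qed.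

Lemma gap_weight k : Mr k - Mr i <= gap * weight k.
Proof.
case: (ltnP k i) => [/gap_weight_lt -> // | ik].
by rewrite weight_tail // mulr0 subr_le0 Mrow_sorted.
Qed.

Definition test_vector (k : 'I_n) : C := c k * (1 + weight k).

Lemma test_vector_gt0 k : 0 < test_vector k.
Proof.
by apply: mulr_gt0 => //; apply: lt_le_trans ltr01 _; rewrite lerDl weight_ge0.
Qed.

(* The slack of row k: a sum of nonnegative terms measuring how far the
   estimates scaled <= cap and M_k - M_i <= gap * e_k are from equality. *)
Definition row_slack (k : 'I_n) : C :=
  \sum_l (cap k l - scaled k l) * weight l + (gap * weight k - (Mr k - Mr i)).

(* Weighting the caps: the diagonal contributes M e_k and the rest N e_l. *)
Lemma cap_weight_sum k :
  \sum_l cap k l * weight l = (lam - Mr i) + (M - N) * weight k.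
Proof.
rewrite -N_weight_sum (bigD1 k) //= [in RHS](bigD1 k) //= {1}/cap eqxx mulrDr.
rewrite (eq_bigr (fun l => N * weight l)) => [|l /negbTE lk]; last by rewrite /cap lk.
rewrite -mulr_sumr; ring.
Qed.

Lemma test_vector_row k :
  \sum_l A k l * test_vector l = lam * test_vector k - c k * row_slack k.
Proof.
have -> : \sum_l A k l * test_vector l = c k * (Mr k + \sum_l scaled k l * weight l).
  rewrite Mrow_scaled -big_split mulr_sumr; apply: eq_bigr => l _.
  by rewrite /test_vector /scaled /=; field.
have -> : row_slack k = \sum_l cap k l * weight l - \sum_l scaled k l * weight l
                        + (gap * weight k - (Mr k - Mr i)).
  by rewrite /row_slack -sumrB; congr (_ + _); apply: eq_bigr => l _; rewrite mulrBl.
by rewrite cap_weight_sum /test_vector /gap; ring.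
Qed.

Lemma row_slack_ge0 k : 0 <= row_slack k.
Proof.
rewrite addr_ge0 ?subr_ge0 ?gap_weight // sumr_ge0 // => l _.
by rewrite mulr_ge0 ?weight_ge0 // subr_ge0 scaled_le_cap.
Qed.

Lemma row_slack_eq0 k : row_slack k = 0 <->
  (forall l, weight l != 0 -> scaled k l = cap k l) /\ Mr k - Mr i = gap * weight k.
Proof.
have terms_ge0 l : true -> 0 <= (cap k l - scaled k l) * weight l.
  by rewrite mulr_ge0 ?weight_ge0 // subr_ge0 scaled_le_cap.
have diag_ge0 : 0 <= gap * weight k - (Mr k - Mr i) by rewrite subr_ge0 gap_weight.
split=> [/eqP | [tight diag_eq]].
  rewrite paddr_eq0 ?sumr_ge0 // subr_eq0 => /andP[/eqP sum0 /eqP diag_eq].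
  split=> // l /negbTE w_neq0; move: (psumr_eq0P terms_ge0 sum0 (i := l) isT) => /eqP.
  by rewrite mulf_eq0 w_neq0 orbF subr_eq0 => /eqP.
rewrite /row_slack diag_eq subrr addr0 big1 // => l _.
by case: (eqVneq (weight l) 0) => [-> | /tight ->]; rewrite ?mulr0 ?subrr ?mul0r.
Qed.

Lemma test_vector_sub k : \sum_l A k l * test_vector l <= lam * test_vector k.
Proof. by rewrite test_vector_row gerBl mulr_ge0 ?row_slack_ge0 // ltW. Qed.

Lemma test_vector_eigen :
  (forall k, \sum_l A k l * test_vector l = lam * test_vector k) <->
  forall k, row_slack k = 0.
Proof.
split=> eq_rows k; last by rewrite test_vector_row eq_rows mulr0 subr0.
have /eqP := eq_rows k; rewrite test_vector_row subr_eq addrC -subr_eq subrr.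
by rewrite eq_sym mulf_eq0 (negbTE (c_neq0 k)) => /eqP.
Qed.

(* The equality conditions of the theorem (indices are 0-based, so paper
   index t corresponds to t - 1). *)
Definition equality_case : Prop :=
  (forall j k : 'I_n, Mr j = Mr k) \/
  exists t : 'I_n, [/\ (1 <= t)%N, (t <= i)%N,
    (forall k : 'I_n, (k < t)%N -> A k k = M),
    (forall k l : 'I_n, (l < t)%N -> k != l -> A k l * c l / c k = N) &
    (forall k l : 'I_n, (t <= k)%N -> (t <= l)%N -> Mr k = Mr l)].

(* Tight estimates give the equality case, with t the first index at which
   M_t = M_i: the weights are nonzero exactly before t. *)
Lemma tight_rows_equality_case :
  (forall k l, weight l != 0 -> scaled k l = cap k l) ->
  (forall k, (i <= k)%N -> Mr k = Mr i) -> equality_case.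
Proof.
move=> tight tail.
have [t /eqP Mt t_min] := @arg_minnP _ i (fun k => Mr k == Mr i) val (eqxx _).
have t_le_i : (t <= i)%N := t_min i (eqxx _).
have Mtail k : (t <= k)%N -> Mr k = Mr i.
  case: (leqP i k) => [/tail // | ki tk].
  by apply: le_anti; rewrite -{1}Mt !Mrow_sorted // ltnW.
have weight_head l : (l < t)%N -> weight l != 0.
  move=> lt; apply: weight_neq0; first exact: leq_trans lt t_le_i.
  by apply/negP => /t_min; rewrite leqNgt lt.
case: (posnP t) => [t0 | t_gt0]; first by left=> j k; rewrite !Mtail ?t0.
right; exists t; split=> // [k kt | k l lt kl | k l tk tl]; last by rewrite !Mtail.
  by rewrite -scaled_diag (tight k k (weight_head k kt)) /cap eqxx.
by rewrite -[LHS]/(scaled k l) (tight k l (weight_head l lt)) /cap eq_sym (negbTE kl).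
Qed.

Lemma equality_case_tight_rows : equality_case ->
  (forall k l, weight l != 0 -> scaled k l = cap k l) /\
  (forall k, (i <= k)%N -> Mr k = Mr i).
Proof.
case=> [all_eq | [t [_ t_le_i diag off tail]]].
  by split=> [k l | k _]; rewrite ?weight_eq0 ?eqxx.
have Mtail l : (t <= l)%N -> Mr l = Mr i by move=> tl; apply: tail.
split=> [k l w_neq0 | k ik]; last by apply: Mtail; apply: leq_trans ik.
have lt : (l < t)%N.
  by rewrite ltnNge; apply/negP => /Mtail /weight_eq0; apply/eqP.
rewrite /cap; case: eqP => [<- | /eqP lk]; first by rewrite scaled_diag diag.
by apply: off; rewrite // eq_sym.
Qed.

Lemma slack_free_iff : (forall k, row_slack k = 0) <-> equality_case.
Proof.
split=> [slack0 | /equality_case_tight_rows[tight tail] k].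
  have tight_row k := (row_slack_eq0 k).1 (slack0 k).
  apply: tight_rows_equality_case => [k l | k ik]; first exact: (tight_row k).1.
  move: (tight_row k).2; rewrite weight_tail // mulr0 => /eqP.
  by rewrite subr_eq0 => /eqP.
apply/row_slack_eq0; split; first exact: tight.
have [ki | ik] := ltnP k i; first exact: gap_weight_lt.
by rewrite (tail k ik) subrr weight_tail // mulr0.
Qed.

End TestVector.

(* Indices are 0-based: paper index i corresponds to i : 'I_n with value i-1. *)
Theorem theorem1 (C : numClosedFieldType) (n : nat) (A : 'M[C]_n) (c : 'I_n -> C) :
  (2 <= n)%N ->
  nonneg_mx A ->
  irreducible_mx A ->
  (forall i, 0 < c i) ->
  (forall i j : 'I_n, (i <= j)%N -> Mrow A c j <= Mrow A c i) ->
  0 < Noff A c ->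
  forall i : 'I_n,
    spectral_radius A <= bound A c i /\
    (spectral_radius A = bound A c i <->
      ((forall j k : 'I_n, Mrow A c j = Mrow A c k) \/
       exists t : 'I_n, [/\ (1 <= t)%N, (t <= i)%N,
         (forall k : 'I_n, (k < t)%N -> A k k = Mdiag A),
         (forall k l : 'I_n, (l < t)%N -> k != l -> A k l * c l / c k = Noff A c) &
         (forall k l : 'I_n, (t <= k)%N -> (t <= l)%N -> Mrow A c k = Mrow A c l)])).
Proof.
move=> n_ge2 A_ge0 irr c_gt0 Mrow_sorted N_gt0 i.
have [lam_gt0 _ _] := bound_facts i A_ge0 c_gt0 Mrow_sorted N_gt0.
have [rho_le rho_eq] := subinvariant_spectral_radius (ltnW n_ge2) A_ge0 irr
  (test_vector_gt0 i A_ge0 c_gt0 Mrow_sorted N_gt0)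
  (test_vector_sub i A_ge0 c_gt0 Mrow_sorted N_gt0) lam_gt0.
split=> //; rewrite rho_eq test_vector_eigen //.
exact: slack_free_iff.
Qed.
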